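(* Let $A$ be a finite-dimensional associative algebra over $K=\mathbb{R}$ or $\mathbb{C}$, let $\{\cdot,\cdot\}$ be a quadratic pre-Poisson bracket on $A$ (not necessarily compatible with the multiplication), let $\delta\colon\mathrm{Symm}(A\otimes A)\to A\wedge A\subset A\otimes A$ be the dual of the map $\delta^*\colon A^*\wedge A^*\to\mathrm{Sym}^2(A^* )$ encoding the bracket, and let $\tilde\delta\colon A\otimes A\to A\otimes A$ be an arbitrary linear extension of $\delta$. Then for every fully symmetric tensor $X\in A\otimes A\otimes A$ the value $[[\tilde\delta,\tilde\delta]](X)$ depends only on $\delta$ (not on the chosen extension), and the bracket satisfies the Jacobi identity if and only if $[[\tilde\delta,\tilde\delta]](X)=0$ for every fully symmetric $X\in A\otimes A\otimes A$.
   Context: A pre-Poisson bracket on $A$ is a bilinear skew-symmetric map on $C^\infty(A)$ satisfying the Leibniz rule; it is quadratic if the bracket of two linear functions (elements of $A^*$) is a homogeneous quadratic function (element of $\mathrm{Sym}^2(A^* )$); it is then encoded by $\delta^*(\xi\wedge\eta)=\{\xi,\eta\}$, and $\delta$ is the dual map under the natural identifications of $\mathrm{Symm}(A\otimes A)$ with $(\mathrm{Sym}^2A^* )^*$ and $A\wedge A$ with $(A^*\wedge A^* )^*$. For a linear operator $P$ on $V\otimes V$, $P^{12}$ denotes the operator on $V\otimes V\otimes V$ acting as $P$ on the first two factors and as the identity on the third; $P^{13},P^{23}$ are defined similarly. The Schouten bracket is the operator $[[P,P]]=[P^{12},P^{13}]+[P^{12},P^{23}]+[P^{13},P^{23}]$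 on $V^{\otimes3}$, where $[\cdot,\cdot]$ is the commutator of operators. *)

From HB Require Import structures.
From mathcomp Require Import all_boot all_order all_algebra.
From mathcomp Require Import mpoly.
Set Implicit Arguments. Unset Strict Implicit. Unset Printing Implicit Defensive.
Import Order.TTheory GRing.Theory Num.Theory.
Local Open Scope ring_scope.

(* Coordinates: A = K^n with its standard basis e_0..e_{n-1};
   A^* has dual basis x_i = 'X_i (coordinate functions);
   functions on A are modelled by polynomial functions {mpoly K[n]};
   A (x) A   ~ 'M[K]_n          (T = sum_{ij} T i j e_i (x) e_j);
   A (x) A (x) A ~ 'I_n -> 'I_n -> 'I_n -> K. *)

Definition tensor3 (K : Type) (n : nat) := 'I_n -> 'I_n -> 'I_n -> K.

Definition assoc_algebra (K : numFieldType) (n : nat)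
    (mul : 'rV[K]_n -> 'rV[K]_n -> 'rV[K]_n) : Prop :=
  [/\ forall a u v w, mul (a *: u + v) w = a *: mul u w + mul v w,
      forall a u v w, mul u (a *: v + w) = a *: mul u v + mul u w
    & forall u v w, mul (mul u v) w = mul u (mul v w)].

Definition pre_poisson (K : numFieldType) (n : nat)
    (br : {mpoly K[n]} -> {mpoly K[n]} -> {mpoly K[n]}) : Prop :=
  [/\ forall a f g h, br (a *: f + g) h = a *: br f h + br g h,
      forall f g, br f g = - br g f
    & forall f g h, br (f * g) h = f * br g h + g * br f h].

Definition quadratic_bracket (K : numFieldType) (n : nat)
    (br : {mpoly K[n]} -> {mpoly K[n]} -> {mpoly K[n]}) : Prop :=
  forall p q : {mpoly K[n]}, p \is 1.-homog -> q \is 1.-homog ->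
    br p q \is 2.-homog.

Definition jacobi (K : numFieldType) (n : nat)
    (br : {mpoly K[n]} -> {mpoly K[n]} -> {mpoly K[n]}) : Prop :=
  forall f g h, br f (br g h) + br g (br h f) + br h (br f g) = 0.

Definition sym2 (K : Type) (n : nat) (S : 'M[K]_n) : Prop :=
  forall i j, S i j = S j i.

Definition sym3 (K : Type) (n : nat) (X : tensor3 K n) : Prop :=
  forall i j k, X i j k = X j i k /\ X i j k = X i k j.

(* Natural pairing Sym^2(A^* ) x Symm(A (x) A) -> K:
   <q, S> = sum_{k,l} S k l * B_q(e_k, e_l), with B_q the polarization of q,
   B_q(e_k,e_l) = (1/2) d_k d_l q. *)
Definition pair_sym (K : numFieldType) (n : nat) (q : {mpoly K[n]}) (S : 'M[K]_n) : K :=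
  \sum_(k < n) \sum_(l < n) S k l * ((mderiv k (mderiv l q))@_0%MM / 2%:R).

(* delta : Symm(A (x) A) -> A /\ A, dual to delta^*(x_i /\ x_j) = {x_i, x_j},
   with A /\ A ~ (A^* /\ A^* )^* via <xi /\ eta, W> = W(xi, eta), i.e.
   <x_i /\ x_j, W> = W i j. *)
Definition delta (K : numFieldType) (n : nat)
    (br : {mpoly K[n]} -> {mpoly K[n]} -> {mpoly K[n]}) (S : 'M[K]_n) : 'M[K]_n :=
  \matrix_(i, j) pair_sym (br 'X_i 'X_j) S.

Definition extends_delta (K : numFieldType) (n : nat)
    (br : {mpoly K[n]} -> {mpoly K[n]} -> {mpoly K[n]})
    (D : {linear 'M[K]_n -> 'M[K]_n}) : Prop :=
  forall S, sym2 S -> D S = delta br S.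

Definition op12 (K : numFieldType) (n : nat) (P : 'M[K]_n -> 'M[K]_n)
  (X : tensor3 K n) : tensor3 K n :=
  fun a b c => P (\matrix_(i, j) X i j c) a b.
Definition op13 (K : numFieldType) (n : nat) (P : 'M[K]_n -> 'M[K]_n)
  (X : tensor3 K n) : tensor3 K n :=
  fun a b c => P (\matrix_(i, k) X i b k) a c.
Definition op23 (K : numFieldType) (n : nat) (P : 'M[K]_n -> 'M[K]_n)
  (X : tensor3 K n) : tensor3 K n :=
  fun a b c => P (\matrix_(j, k) X a j k) b c.

Definition comm3 (K : numFieldType) (n : nat) (F G : tensor3 K n -> tensor3 K n)
  (X : tensor3 K n) : tensor3 K n :=
  fun a b c => F (G X) a b c - G (F X) a b c.

Definition schouten (K : numFieldType) (n : nat) (P : 'M[K]_n -> 'M[K]_n)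
  (X : tensor3 K n) : tensor3 K n :=
  fun a b c => comm3 (op12 P) (op13 P) X a b c + comm3 (op12 P) (op23 P) X a b c
             + comm3 (op13 P) (op23 P) X a b c.

(* Pair symmetric tensors X of A (x) A (x) A with cubic polynomials through third
   derivatives at 0.  Expanding {x_b, x_c} = sum_kl B(e_k, e_l) x_k x_l and using
   the Leibniz rule, <X, {x_a, {x_b, x_c}}> is delta applied to a symmetric matrix
   built from the slices of X, and regrouping the Schouten bracket produces exactly
   these three terms:  [[D, D]](X)_abc = - <X, J(x_a, x_b, x_c)>, J the Jacobiator.
   This depends on delta only, and vanishes for all symmetric X iff the cubics
   J(x_a, x_b, x_c) vanish, because symmetrised unit tensors read off all third
   derivatives.  Finally J is a derivation in each argument, so it vanishes
   identically once it vanishes on the coordinate functions. *)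

From HB Require Import structures.
From mathcomp Require Import all_boot all_order all_algebra.
From mathcomp Require Import mpoly ring.
From Stdlib Require Import FunctionalExtensionality.
Set Implicit Arguments. Unset Strict Implicit. Unset Printing Implicit Defensive.
Import Order.TTheory GRing.Theory Num.Theory.
Local Open Scope ring_scope.

Section KroneckerSums.
Variables (R : pzSemiRingType) (n : nat).
Implicit Types (a b c : 'I_n).

Lemma sum_kronecker (F : 'I_n -> R) a : \sum_k F k * (k == a)%:R = F a.
Proof. by under eq_bigr do rewrite mulr_natr mulrb; rewrite -big_mkcond big_pred1_eq. Qed.

Lemma sum2_kronecker (F : 'I_n -> 'I_n -> R) a b :
  \sum_k \sum_l F k l * (k == a)%:R * (l == b)%:R = F a b.
Proof. by under eq_bigr do rewrite sum_kronecker; rewrite sum_kronecker. Qed.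

Lemma sum3_kronecker (F : 'I_n -> 'I_n -> 'I_n -> R) a b c :
  \sum_i \sum_j \sum_k F i j k * (i == a)%:R * (j == b)%:R * (k == c)%:R = F a b c.
Proof.
under eq_bigr do under eq_bigr do rewrite sum_kronecker.
by under eq_bigr do rewrite sum_kronecker; rewrite sum_kronecker.
Qed.

Lemma sum3_kronecker1 (F : 'I_n -> 'I_n -> 'I_n -> R) a :
  \sum_u \sum_v \sum_w F u v w * (u == a)%:R = \sum_v \sum_w F a v w.
Proof.
under eq_bigr do under eq_bigr do rewrite -mulr_suml.
by under eq_bigr do rewrite -mulr_suml; rewrite sum_kronecker.
Qed.

Lemma sum3_kronecker2 (F : 'I_n -> 'I_n -> 'I_n -> R) a :
  \sum_u \sum_v \sum_w F u v w * (v == a)%:R = \sum_u \sum_w F u a w.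
Proof.
apply: eq_bigr => u _; rewrite exchange_big /=.
by under eq_bigr do rewrite sum_kronecker.
Qed.

Lemma sum3_kronecker3 (F : 'I_n -> 'I_n -> 'I_n -> R) a :
  \sum_u \sum_v \sum_w F u v w * (w == a)%:R = \sum_u \sum_v F u v a.
Proof. by under eq_bigr do under eq_bigr do rewrite sum_kronecker. Qed.

End KroneckerSums.

Section MpolyDerivativesAtZero.
Variables (R : comNzRingType) (n : nat).
Local Notation P := {mpoly R[n]}.
Implicit Types (p g : P) (i j k l u v w : 'I_n).

Lemma mpolyX_dhomog1 i : ('X_i : P) \is 1.-homog.
Proof. by rewrite dhomogX /= mdeg1. Qed.

Lemma mcoeff0X i : ('X_i : P)@_0 = 0.
Proof. by rewrite mcoeffX mnm1_eq0. Qed.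

Lemma mderivXi i j : mderiv j ('X_i : P) = (i == j)%:R%:MP.
Proof.
rewrite mderivX mnm1E; have [<-|_] := eqVneq i j; last by rewrite scale0r.
have -> : (U_(i) - U_(i))%MM = 0%MM :> 'X_{1..n}.
  by apply/mnmP => t; rewrite mnmBE subnn mnm0E.
by rewrite mpolyX0 scale1r.
Qed.

Lemma mderiv2_mulXX_at0 i j k l :
  (mderiv i (mderiv j ('X_k * 'X_l : P)))@_0 =
  (k == j)%:R * (l == i)%:R + (k == i)%:R * (l == j)%:R.
Proof.
rewrite !(mderivM, mderivD, mderivXi, mderivC) !mcoeffD !rmorphM /=.
by rewrite !(mpolyCK, mcoeff0X, mcoeff0); ring.
Qed.

Lemma mderiv3_mulX_at0 k u v w g :
  (mderiv u (mderiv v (mderiv w ('X_k * g))))@_0 =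
    (mderiv u (mderiv v g))@_0 * (w == k)%:R
  + (mderiv u (mderiv w g))@_0 * (v == k)%:R
  + (mderiv v (mderiv w g))@_0 * (u == k)%:R.
Proof.
rewrite !(mderivM, mderivD, mderivXi, mderivC) !mcoeffD !rmorphM /=.
by rewrite !(mpolyCK, mcoeff0X, mcoeff0) ![(_ == k)]eq_sym; ring.
Qed.

Lemma mderiv2_at0_sum i j (F : 'I_n -> P) :
  (mderiv i (mderiv j (\sum_k F k)))@_0 = \sum_k (mderiv i (mderiv j (F k)))@_0.
Proof. by rewrite (raddf_sum (mderiv j)) (raddf_sum (mderiv i)) raddf_sum. Qed.

Lemma mpoly_subalg_ind (Q : P -> Prop) :
  Q 1 -> (forall i, Q 'X_i) -> (forall f g, Q f -> Q g -> Q (f * g)) ->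
  (forall a f g, Q f -> Q g -> Q (a *: f + g)) -> forall p, Q p.
Proof.
move=> Q1 QX QM QZD; have Q0 : Q 0 by rewrite -(addNr 1) -scaleN1r; apply: QZD.
elim/mpolyind => // a m p _ _ Qp; apply: QZD => //; rewrite mpolyXE_id.
apply: (big_ind Q) => // i _; elim: (m i) => [|k Qk]; first by rewrite expr0.
by rewrite exprS; apply: QM.
Qed.

Lemma mdeg_eqS_split (m : 'X_{1..n}) d : mdeg m = d.+1 ->
  exists i m', m = (m' + U_(i))%MM /\ mdeg m' = d.
Proof.
move=> mdeg_m; have [i m_i_gt0] : exists i, (0 < m i)%N.
  apply/existsP; apply: contraT; rewrite negb_exists => /forallP m0.
  suff : m = 0%MM by move=> m_eq0; move: mdeg_m; rewrite m_eq0 mdeg0.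
  by apply/mnmP => j; rewrite mnm0E; apply/eqP; rewrite -leqn0 leqNgt m0.
exists i, (m - U_(i))%MM.
have m_split : m = (m - U_(i) + U_(i))%MM.
  apply/mnmP => j; rewrite mnmDE mnmBE mnm1E.
  by have [<-|_] := eqVneq i j; rewrite ?subn0 ?addn0 ?subnK.
by split=> //; move: mdeg_m; rewrite {1}m_split mdegD mdeg1 addn1 => -[].
Qed.

Lemma mderivm_mdegS p (m : 'X_{1..n}) d : mdeg m = d.+1 ->
  exists i m', mdeg m' = d /\ p^`M[m] = mderiv i p^`M[m'].
Proof.
move=> /mdeg_eqS_split [i [m' [-> mdeg_m']]]; exists i, m'.
by rewrite mderivmDm mderivmU1m.
Qed.

End MpolyDerivativesAtZero.

Section HomogeneousVanishing.
Variables (R : numDomainType) (n : nat).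
Local Notation P := {mpoly R[n]}.

Lemma dhomog_eq0 d (p : P) : p \is d.-homog ->
  (forall m : 'X_{1..n}, mdeg m = d -> (p^`M[m])@_0 = 0) -> p = 0.
Proof.
move=> p_homog p_derivs; apply/mpolyP => m; rewrite mcoeff0.
have [mdeg_m|] := eqVneq (mdeg m) d; last exact: dhomog_nemf_coeff p_homog.
have /eqP := p_derivs m mdeg_m; rewrite mcoeff_mderivm addm0 mulrn_eq0.
case/orP => [|/eqP //]; rewrite eqn0Ngt => /negP[].
by apply: prodn_gt0 => i; rewrite ffactnn fact_gt0.
Qed.

Lemma dhomog2_eq0 (p : P) : p \is 2.-homog ->
  (forall i j, (mderiv i (mderiv j p))@_0 = 0) -> p = 0.
Proof.
move=> p_homog p_derivs; apply: (dhomog_eq0 p_homog) => m.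
case/(mderivm_mdegS p)=> [i [m1 [/(mderivm_mdegS p)[j [m0 [/eqP]]]]]].
by rewrite mdeg_eq0 => /eqP-> dm1 dm; rewrite dm dm1 mderivm0m.
Qed.

Lemma dhomog3_eq0 (p : P) : p \is 3.-homog ->
  (forall i j k, (mderiv i (mderiv j (mderiv k p)))@_0 = 0) -> p = 0.
Proof.
move=> p_homog p_derivs; apply: (dhomog_eq0 p_homog) => m.
case/(mderivm_mdegS p)=> [i [m1 [/(mderivm_mdegS p)[j [m2 [/(mderivm_mdegS p)[k [m0 [/eqP]]]]]]]]].
by rewrite mdeg_eq0 => /eqP-> dm2 dm1 dm; rewrite dm dm1 dm2 mderivm0m.
Qed.

End HomogeneousVanishing.

Section SymmetricPairings.
Variables (K : numFieldType) (n : nat).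
Local Notation P := {mpoly K[n]}.
Implicit Types (q f g : P) (X : tensor3 K n) (i j k l u v w : 'I_n).

Definition polar q k l : K := (mderiv k (mderiv l q))@_0 / 2%:R.

Lemma pair_symE q S : pair_sym q S = \sum_k \sum_l S k l * polar q k l.
Proof. by []. Qed.

Lemma polarC q k l : polar q k l = polar q l k.
Proof. by rewrite /polar mderiv_comm. Qed.

Lemma dhomog2_polar_expansion q : q \is 2.-homog ->
  q = \sum_k \sum_l polar q k l *: ('X_k * 'X_l).
Proof.
move=> q_homog; apply/eqP; rewrite -subr_eq0; apply/eqP; apply: dhomog2_eq0.
  rewrite rpredB // rpred_sum // => k _; rewrite rpred_sum // => l _.
  by rewrite rpredZ //; apply: (dhomogM (mpolyX_dhomog1 _ _) (mpolyX_dhomog1 _ _)).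
move=> i j; rewrite !mderivB mcoeffB mderiv2_at0_sum.
under eq_bigr => k _ do rewrite mderiv2_at0_sum.
under eq_bigr => k _ do under eq_bigr => l _ do
  rewrite !mderivZ mcoeffZ mderiv2_mulXX_at0 mulrDr mulrA mulrA.
under eq_bigr => k _ do rewrite big_split /=.
rewrite big_split /= !sum2_kronecker [polar q j i]polarC.
by rewrite /polar -splitr subrr.
Qed.

Definition tslice X c : 'M[K]_n := \matrix_(i, j) X i j c.

Definition pair_sym3 X f : K :=
  \sum_u \sum_v \sum_w X u v w * ((mderiv u (mderiv v (mderiv w f)))@_0 / 6%:R).

Lemma pair_sym3_is_linear X : linear_for *%R (pair_sym3 X).
Proof.
move=> a f g; rewrite /pair_sym3 mulr_sumr -big_split; apply: eq_bigr => u _.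
rewrite mulr_sumr -big_split; apply: eq_bigr => v _.
rewrite mulr_sumr -big_split; apply: eq_bigr => w _.
by rewrite !(mderivD, mderivZ) mcoeffD mcoeffZ /=; ring.
Qed.

HB.instance Definition _ X :=
  GRing.isLinear.Build K P K *%R (pair_sym3 X) (pair_sym3_is_linear X).

Lemma pair_sym3_mulX X k g : sym3 X ->
  pair_sym3 X ('X_k * g) = pair_sym g (tslice X k).
Proof.
move=> symX; pose T i j := (mderiv i (mderiv j g))@_0.
have expand u v w : X u v w * ((mderiv u (mderiv v (mderiv w ('X_k * g))))@_0 / 6%:R) =
    X u v w * T u v / 6%:R * (w == k)%:R + X u v w * T u w / 6%:R * (v == k)%:R
    + X u v w * T v w / 6%:R * (u == k)%:R.
  by rewrite mderiv3_mulX_at0; ring.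
rewrite /pair_sym3; under eq_bigr do under eq_bigr do under eq_bigr do rewrite expand.
under eq_bigr do under eq_bigr do rewrite !big_split /=.
under eq_bigr do rewrite !big_split /=.
rewrite !big_split /= sum3_kronecker1 sum3_kronecker2 sum3_kronecker3 pair_symE.
rewrite -!big_split; apply: eq_bigr => u _; rewrite -!big_split; apply: eq_bigr => v _ /=.
have [_ X_ukv] := symX u k v; have [X_kuv _] := symX k u v.
by rewrite mxE X_kuv X_ukv /T /polar; field.
Qed.

Definition sym_unit3 u v w : tensor3 K n := fun i j k =>
    (i == u)%:R * (j == v)%:R * (k == w)%:R + (i == u)%:R * (j == w)%:R * (k == v)%:R
  + (i == v)%:R * (j == u)%:R * (k == w)%:R + (i == v)%:R * (j == w)%:R * (k == u)%:R
  + (i == w)%:R * (j == u)%:R * (k == v)%:R + (i == w)%:R * (j == v)%:R * (k == u)%:R.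

Lemma sym_unit3_sym u v w : sym3 (sym_unit3 u v w).
Proof. by move=> i j k; split; rewrite /sym_unit3; ring. Qed.

Lemma pair_sym3_sym_unit3 u v w f :
  pair_sym3 (sym_unit3 u v w) f = (mderiv u (mderiv v (mderiv w f)))@_0.
Proof.
pose T i j k := (mderiv i (mderiv j (mderiv k f)))@_0.
have T12 i j k : T i j k = T j i k by rewrite /T mderiv_comm.
have T23 i j k : T i j k = T i k j by rewrite /T (mderiv_comm k j).
have expand i j k : sym_unit3 u v w i j k * (T i j k / 6%:R) =
    T i j k / 6%:R * (i == u)%:R * (j == v)%:R * (k == w)%:R
  + T i j k / 6%:R * (i == u)%:R * (j == w)%:R * (k == v)%:R
  + T i j k / 6%:R * (i == v)%:R * (j == u)%:R * (k == w)%:R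
  + T i j k / 6%:R * (i == v)%:R * (j == w)%:R * (k == u)%:R
  + T i j k / 6%:R * (i == w)%:R * (j == u)%:R * (k == v)%:R
  + T i j k / 6%:R * (i == w)%:R * (j == v)%:R * (k == u)%:R.
  by rewrite /sym_unit3; ring.
rewrite /pair_sym3 -/(T u v w).
under eq_bigr do under eq_bigr do under eq_bigr do rewrite expand.
under eq_bigr do under eq_bigr do rewrite !big_split /=.
under eq_bigr do rewrite !big_split /=.
rewrite !big_split /= !(sum3_kronecker (fun i j k => T i j k / 6%:R)).
rewrite [T v w u]T12 ![T w v u]T23 ![T w u v]T12 ![T u w v]T23 [T v u w]T12.
by field.
Qed.

Lemma dhomog3_pair_sym3_eq0 f : f \is 3.-homog ->
  (forall X, sym3 X -> pair_sym3 X f = 0) -> f = 0.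
Proof.
move=> f_homog f_pair0; apply: dhomog3_eq0 => // u v w.
by rewrite -pair_sym3_sym_unit3 f_pair0 //; apply: sym_unit3_sym.
Qed.

End SymmetricPairings.

Section PrePoissonBracket.
Variables (K : numFieldType) (n : nat).
Local Notation P := {mpoly K[n]}.
Variable br : P -> P -> P.
Hypothesis br_pre_poisson : pre_poisson br.
Implicit Types (f g h : P).

Lemma brDZl a f g h : br (a *: f + g) h = a *: br f h + br g h.
Proof. by case: br_pre_poisson. Qed.

Lemma br_skew f g : br f g = - br g f.
Proof. by case: br_pre_poisson. Qed.

Lemma br_leibniz f g h : br (f * g) h = f * br g h + g * br f h.
Proof. by case: br_pre_poisson. Qed.

Lemma br0l h : br 0 h = 0.
Proof.
apply: (@addrI _ (br 0 h)); rewrite addr0.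
by have := brDZl 1 0 0 h; rewrite scale1r !addr0 scale1r.
Qed.

Lemma brDl f g h : br (f + g) h = br f h + br g h.
Proof. by rewrite -[f]scale1r brDZl !scale1r. Qed.

Lemma brZl a f h : br (a *: f) h = a *: br f h.
Proof. by rewrite -[a *: f]addr0 brDZl br0l addr0. Qed.

Lemma br0r h : br h 0 = 0.
Proof. by rewrite br_skew br0l oppr0. Qed.

Lemma brDr f g h : br f (g + h) = br f g + br f h.
Proof. by rewrite br_skew brDl opprD -!br_skew. Qed.

Lemma brZr a f h : br h (a *: f) = a *: br h f.
Proof. by rewrite br_skew brZl -scalerN -br_skew. Qed.

Lemma brNr f h : br h (- f) = - br h f.
Proof. by rewrite -scaleN1r brZr scaleN1r. Qed.

Lemma brMr f g h : br f (g * h) = g * br f h + h * br f g.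
Proof. by rewrite br_skew br_leibniz opprD -!mulrN -!br_skew. Qed.

Lemma br1l h : br 1 h = 0.
Proof.
apply: (@addrI _ (br 1 h)); rewrite addr0.
by have := br_leibniz 1 1 h; rewrite mulr1 mul1r.
Qed.

Lemma br1r h : br h 1 = 0.
Proof. by rewrite br_skew br1l oppr0. Qed.

Lemma br_sumr f (F : 'I_n -> P) : br f (\sum_k F k) = \sum_k br f (F k).
Proof. exact: (big_morph _ (brDr f) (br0r f)). Qed.

Definition jacobiator f g h := br f (br g h) + br g (br h f) + br h (br f g).

Lemma jacobiator_cycle f g h : jacobiator f g h = jacobiator g h f.
Proof. by rewrite /jacobiator; ring. Qed.

Lemma jacobiator_linear_l a f f' g h :
  jacobiator (a *: f + f') g h = a *: jacobiator f g h + jacobiator f' g h.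
Proof.
by rewrite /jacobiator brDZl !brDr !brZr !brDZl !brDr !brZr !scalerDr; ring.
Qed.

Lemma jacobiator1 g h : jacobiator 1 g h = 0.
Proof. by rewrite /jacobiator !br1l br1r !br0r !addr0. Qed.

Lemma jacobiatorM f1 f2 g h :
  jacobiator (f1 * f2) g h = f1 * jacobiator f2 g h + f2 * jacobiator f1 g h.
Proof.
rewrite /jacobiator br_leibniz (brMr h f1 f2) brDr !brMr br_leibniz brDr !brMr.
by rewrite (br_skew f2 g) (br_skew f1 g) !brNr; ring.
Qed.

Lemma jacobiator_eq0_vars_l g h :
  (forall i, jacobiator 'X_i g h = 0) -> forall f, jacobiator f g h = 0.
Proof.
move=> vars0; elim/mpoly_subalg_ind => [|i|f1 f2 f1_0 f2_0|a f f' f0 f'0].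
- exact: jacobiator1.
- exact: vars0.
- by rewrite jacobiatorM f1_0 f2_0 !mulr0 addr0.
- by rewrite jacobiator_linear_l f0 f'0 scaler0 addr0.
Qed.

Lemma jacobi_from_vars :
  (forall a b c, jacobiator 'X_a 'X_b 'X_c = 0) -> jacobi br.
Proof.
move=> vars0 f g h; rewrite -/(jacobiator f g h).
apply: jacobiator_eq0_vars_l => a; rewrite jacobiator_cycle.
apply: jacobiator_eq0_vars_l => b; rewrite jacobiator_cycle.
by apply: jacobiator_eq0_vars_l => c; rewrite jacobiator_cycle.
Qed.

End PrePoissonBracket.

Section QuadraticBracket.
Variables (K : numFieldType) (n : nat).
Local Notation P := {mpoly K[n]}.
Variable br : P -> P -> P.
Hypotheses (br_pre_poisson : pre_poisson br) (br_quadratic : quadratic_bracket br).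
Implicit Types (X : tensor3 K n) (S : 'M[K]_n) (a b c i j k l : 'I_n).

Lemma deltaE S a b : delta br S a b = pair_sym (br 'X_a 'X_b) S.
Proof. by rewrite mxE. Qed.

Lemma delta_skew S a b : delta br S a b = - delta br S b a.
Proof.
rewrite !deltaE (br_skew br_pre_poisson 'X_a) -sumrN; apply: eq_bigr => k _.
by rewrite -sumrN; apply: eq_bigr => l _; rewrite /polar !mderivN mcoeffN !mulNr mulrN.
Qed.

Lemma br_var_dhomog2_expansion a b c :
  br 'X_a (br 'X_b 'X_c) =
  \sum_k \sum_l polar (br 'X_b 'X_c) k l *: ('X_k * br 'X_a 'X_l + 'X_l * br 'X_a 'X_k).
Proof.
rewrite {1}(dhomog2_polar_expansion (br_quadratic (mpolyX_dhomog1 _ _) (mpolyX_dhomog1 _ _))).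
rewrite (br_sumr br_pre_poisson); apply: eq_bigr => k _.
rewrite (br_sumr br_pre_poisson); apply: eq_bigr => l _.
by rewrite (brZr br_pre_poisson) (brMr br_pre_poisson).
Qed.

Lemma jacobiator_vars_dhomog3 a b c : jacobiator br 'X_a 'X_b 'X_c \is 3.-homog.
Proof.
have br2_homog x y z : br 'X_x (br 'X_y 'X_z) \is 3.-homog.
  rewrite br_var_dhomog2_expansion rpred_sum // => k _; rewrite rpred_sum // => l _.
  have XB_homog i j : 'X_i * br 'X_x 'X_j \is 3.-homog.
    apply: (dhomogM (mpolyX_dhomog1 _ _)).
    exact: br_quadratic (mpolyX_dhomog1 _ _) (mpolyX_dhomog1 _ _).
  by rewrite rpredZ // rpredD.
by rewrite /jacobiator !rpredD ?br2_homog.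
Qed.

(* For symmetric X this is (delta^{12} X)_{abc}, see [op12_sym3]. *)
Definition delta12 X a b c := delta br (tslice X c) a b.

Definition delta12_sym X a : 'M[K]_n := \matrix_(k, l) (delta12 X a k l + delta12 X a l k).

Lemma delta12_skew X a b c : delta12 X a b c = - delta12 X b a c.
Proof. exact: delta_skew. Qed.

Lemma delta12_sym_sym2 X a : sym2 (delta12_sym X a).
Proof. by move=> k l; rewrite !mxE addrC. Qed.

Lemma pair_sym3_br_vars X a b c : sym3 X ->
  pair_sym3 X (br 'X_a (br 'X_b 'X_c)) = delta br (delta12_sym X a) b c.
Proof.
move=> symX; rewrite br_var_dhomog2_expansion raddf_sum deltaE pair_symE /=.
apply: eq_bigr => k _; rewrite raddf_sum /=; apply: eq_bigr => l _.
rewrite linearZ raddfD /= !pair_sym3_mulX // mxE /delta12 !deltaE.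
by rewrite mulrC addrC.
Qed.

End QuadraticBracket.

Section SchoutenRegrouping.
Variables (K : numFieldType) (n : nat) (D : {linear 'M[K]_n -> 'M[K]_n}).
Implicit Types (X : tensor3 K n) (a b c : 'I_n).

Lemma linear_mxD (F G : 'I_n -> 'I_n -> K) a b :
  D (\matrix_(i, j) F i j) a b + D (\matrix_(i, j) G i j) a b =
  D (\matrix_(i, j) (F i j + G i j)) a b.
Proof.
have -> : \matrix_(i, j) (F i j + G i j) = \matrix_(i, j) F i j + \matrix_(i, j) G i j.
  by apply/matrixP => i j; rewrite !mxE.
by rewrite raddfD mxE.
Qed.

Lemma linear_mxB (F G : 'I_n -> 'I_n -> K) a b :
  D (\matrix_(i, j) F i j) a b - D (\matrix_(i, j) G i j) a b =
  D (\matrix_(i, j) (F i j - G i j)) a b.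
Proof.
have -> : \matrix_(i, j) (F i j - G i j) = \matrix_(i, j) F i j - \matrix_(i, j) G i j.
  by apply/matrixP => i j; rewrite !mxE.
by rewrite raddfB !mxE.
Qed.

(* [[P,P]] = P12 (P13 + P23) - P13 (P12 - P23) - P23 (P12 + P13): for symmetric X
   each inner sum is symmetric in the two slots the outer operator acts on, so
   only the values of D on symmetric matrices enter. *)
Lemma schouten_regroup X a b c : schouten D X a b c =
    D (\matrix_(i, j) (op13 D X i j c + op23 D X i j c)) a b
  - D (\matrix_(i, k) (op12 D X i b k - op23 D X i b k)) a c
  - D (\matrix_(j, k) (op12 D X a j k + op13 D X a j k)) b c.
Proof.
rewrite -linear_mxD -linear_mxB -linear_mxD /schouten /comm3.
by rewrite /op12 /op13 /op23; ring.
Qed.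

End SchoutenRegrouping.

Section SchoutenOnSymmetricTensors.
Variables (K : numFieldType) (n : nat).
Local Notation P := {mpoly K[n]}.
Variable br : P -> P -> P.
Hypotheses (br_pre_poisson : pre_poisson br) (br_quadratic : quadratic_bracket br).
Variable D : {linear 'M[K]_n -> 'M[K]_n}.
Hypothesis D_extends : extends_delta br D.
Variable X : tensor3 K n.
Hypothesis symX : sym3 X.
Implicit Types (a b c : 'I_n).

Lemma tslice_sym2 c : sym2 (tslice X c).
Proof. by move=> i j; rewrite !mxE; case: (symX i j c). Qed.

Lemma op12_sym3 a b c : op12 D X a b c = delta12 br X a b c.
Proof. by rewrite /op12 D_extends //; apply: tslice_sym2. Qed.

Lemma op13_sym3 a b c : op13 D X a b c = delta12 br X a c b.
Proof.
rewrite /op13; have -> : \matrix_(i, k) X i b k = tslice X b.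
  by apply/matrixP => i k; rewrite !mxE; case: (symX i b k).
by rewrite D_extends //; apply: tslice_sym2.
Qed.

Lemma op23_sym3 a b c : op23 D X a b c = delta12 br X b c a.
Proof.
rewrite /op23; have -> : \matrix_(j, k) X a j k = tslice X a.
  by apply/matrixP => j k; rewrite !mxE; case: (symX a j k) => -> _; case: (symX j a k).
by rewrite D_extends //; apply: tslice_sym2.
Qed.

Lemma schouten_sym3 a b c : schouten D X a b c =
  - (delta br (delta12_sym br X a) b c + delta br (delta12_sym br X b) c a
     + delta br (delta12_sym br X c) a b).
Proof.
have skew := delta12_skew br_pre_poisson X.
rewrite schouten_regroup.
have -> : \matrix_(i, j) (op13 D X i j c + op23 D X i j c) = - delta12_sym br X c.
  by apply/matrixP => i j; rewrite !mxE op13_sym3 op23_sym3 (skew i) (skew j) opprD.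
have -> : \matrix_(i, k) (op12 D X i b k - op23 D X i b k) = - delta12_sym br X b.
  by apply/matrixP => i k; rewrite !mxE op12_sym3 op23_sym3 (skew i) opprD.
have -> : \matrix_(j, k) (op12 D X a j k + op13 D X a j k) = delta12_sym br X a.
  by apply/matrixP => j k; rewrite !mxE op12_sym3 op13_sym3.
have oppmxE (M : 'M[K]_n) i j : (- M) i j = - M i j by rewrite mxE.
have D_delta12_sym x : D (delta12_sym br X x) = delta br (delta12_sym br X x).
  exact/D_extends/delta12_sym_sym2.
rewrite !raddfN /= !oppmxE !D_delta12_sym.
by rewrite (delta_skew br_pre_poisson _ a c); ring.
Qed.

Lemma schouten_sym3_jacobiator :
  schouten D X = fun a b c => - pair_sym3 X (jacobiator br 'X_a 'X_b 'X_c).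
Proof.
do 3 apply: functional_extensionality => ?.
by rewrite schouten_sym3 /jacobiator !raddfD /= !pair_sym3_br_vars.
Qed.

End SchoutenOnSymmetricTensors.

Unset Implicit Arguments.

Theorem theorem2 (K : numFieldType) (n : nat)
    (mul : 'rV[K]_n -> 'rV[K]_n -> 'rV[K]_n)
    (br : {mpoly K[n]} -> {mpoly K[n]} -> {mpoly K[n]}) :
  assoc_algebra mul -> pre_poisson br -> quadratic_bracket br ->
  (forall D1 D2 : {linear 'M[K]_n -> 'M[K]_n},
     extends_delta br D1 -> extends_delta br D2 ->
     forall X : tensor3 K n, sym3 X -> schouten D1 X = schouten D2 X) /\
  (forall D : {linear 'M[K]_n -> 'M[K]_n}, extends_delta br D ->
     (jacobi br <-> forall X : tensor3 K n, sym3 X -> schouten D X = (fun _ _ _ => 0))).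
Proof.
move=> _ br_pp br_quad; have schoutenE := schouten_sym3_jacobiator br_pp br_quad.
split=> [D1 D2 D1_ext D2_ext X symX | D D_ext].
  by rewrite (schoutenE D1) ?(schoutenE D2).
split=> [br_jacobi X symX | schouten0].
  rewrite schoutenE //; do 3 apply: functional_extensionality => ?.
  by rewrite [jacobiator _ _ _ _]br_jacobi raddf0 oppr0.
apply: (jacobi_from_vars br_pp) => a b c.
apply: (dhomog3_pair_sym3_eq0 (jacobiator_vars_dhomog3 br_pp br_quad a b c)) => X symX.
apply/eqP; rewrite -oppr_eq0.
by have /(congr1 (fun T => T a b c)) := schouten0 X symX; rewrite schoutenE // => ->.
Qed.
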